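(* Let $(A_n)_{n\ge0}$ be an Appell sequence, i.e. $A_0=1$ and $A_n'=nA_{n-1}$ for $n\ge1$, so that $A_n(x)=\sum_{j=0}^n\binom nj z_jx^{n-j}$ with $z_0=1$ and $z_j=A_j(0)$. For any partition $\lambda$ of size $n$, $$A_\lambda(x)=x^n+\binom n1z_1x^{n-1}+\Big(c(\lambda)(z_2-z_1^2)+\binom n2 z_1^2\Big)x^{n-2}+O(x^{n-3}),$$ i.e. the coefficients of $x^n$, $x^{n-1}$, $x^{n-2}$ in $A_\lambda$ are $1$, $nz_1$ and $c(\lambda)(z_2-z_1^2)+\binom n2z_1^2$ respectively.
   Context: For a partition $\lambda=(\lambda_1\ge\dots\ge\lambda_{\ell(\lambda)}>0)$ with degree vector $n_i=\lambda_i+\ell(\lambda)-i$, the Wronskian Appell polynomial is $A_\lambda=\mathrm{Wr}[A_{n_1},\dots,A_{n_{\ell(\lambda)}}]/\prod_{i<j}(n_j-n_i)$ ($A_\emptyset=1$). The content sum is $c(\lambda)=\sum_{(i,j)\in\lambda}(j-i)$, summed over the boxes $(i,j)$, $1\le i\le\ell(\lambda)$, $1\le j\le\lambda_i$, of the Young diagram. *)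

From HB Require Import structures.
From mathcomp Require Import all_boot all_order all_algebra.
Set Implicit Arguments. Unset Strict Implicit. Unset Printing Implicit Defensive.
Import Order.TTheory GRing.Theory Num.Theory.
Local Open Scope ring_scope.

Definition is_partition (la : seq nat) : bool :=
  sorted geq la && all (fun x => 0 < x)%N la.

(* degree vector n_i = la_i + l(la) - i  (1-based i), here 0-based index i *)
Definition degvec (la : seq nat) : seq nat :=
  [seq (nth 0 la i + size la - i.+1)%N | i <- iota 0 (size la)].

Definition wronskian (R : comNzRingType) (fs : seq {poly R}) : {poly R} :=
  \det (\matrix_(i < size fs, j < size fs) (fs`_j)^`(i)).

Definition appell_wr (R : fieldType) (A : nat -> {poly R}) (la : seq nat)
    : {poly R} :=
  let ns := degvec la in
  (\prod_(i < size ns) \prod_(j < size ns | (i < j)%N)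
      ((nth 0%N ns j)%:R - (nth 0%N ns i)%:R : R))^-1 *: wronskian (map A ns).

Definition content (la : seq nat) : int :=
  \sum_(i < size la) \sum_(j < nth 0 la i) ((j%:Z) - (i%:Z)).

Definition appell (R : fieldType) (A : nat -> {poly R}) : Prop :=
  A 0%N = 1 /\ forall n : nat, (A n.+1)^`() = n.+1%:R *: A n.

(* Since A_n^(i) = n^_i A_(n-i), the Leibniz expansion writes the Wronskian as
   sum_s sgn(s) prod_i (n_(s i))^_i * prod_i A_(n_(s i) - i), and every such product
   of Appell polynomials has degree |la|.  Read from the top (through the reversal
   [revp]), a product prod_k A_(a_k) begins with the coefficients 1, (sum a_k) z1 and
   (sum C(a_k, 2)) (z2 - z1^2) + C(sum a_k, 2) z1^2, so s enters only through
   sum_i C(n_(s i) - i, 2).  The falling-factorial matrix F = (n_j^_i) has the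
   Vandermonde determinant normalising A_la, and the signed sum of
   sum_i C(n_(s i) - i, 2) against F is computed by cofactor expansions, using
   n_j F_ij = F_(i+1)j + i F_ij; it equals c(la) det F. *)

From HB Require Import structures.
From mathcomp Require Import all_boot all_order all_algebra all_fingroup.
From mathcomp Require Import zify ring.
Set Implicit Arguments. Unset Strict Implicit. Unset Printing Implicit Defensive.
Import Order.TTheory GRing.Theory Num.Theory.
Local Open Scope ring_scope.

Section ReversePoly.
Variable R : comNzRingType.
Implicit Types (p q : {poly R}) (d : nat).

Definition revp d p : {poly R} := \poly_(i < d.+1) p`_(d - i).

Lemma coef_revp d p i : (i <= d)%N -> (revp d p)`_i = p`_(d - i).
Proof. by rewrite coef_poly ltnS => ->. Qed.

Fact revp_is_linear d : linear (revp d).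
Proof.
move=> a p q; apply/polyP => i.
by rewrite coefD coefZ !coef_poly coefD coefZ; case: ifP; rewrite ?mulr0 ?addr0.
Qed.

HB.instance Definition _ d :=
  GRing.isLinear.Build R {poly R} {poly R} _ (revp d) (revp_is_linear d).

Lemma revpXn d e : (e <= d)%N -> revp d 'X^e = 'X^(d - e).
Proof.
move=> le_ed; apply/polyP => k; rewrite coef_poly !coefXn ltnS.
case: leqP => [le_kd|lt_dk]; last by case: eqP => //; lia.
by congr (_%:R); apply/eqP/eqP; lia.
Qed.

Lemma size_mul_le p q d1 d2 : (size p <= d1.+1)%N -> (size q <= d2.+1)%N ->
  (size (p * q)%R <= (d1 + d2).+1)%N.
Proof. by move=> hp hq; apply: leq_trans (size_mul_leq _ _) _; lia. Qed.

Lemma revpM p q d1 d2 : (size p <= d1.+1)%N -> (size q <= d2.+1)%N ->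
  revp (d1 + d2) (p * q) = revp d1 p * revp d2 q.
Proof.
have expand (r : {poly R}) d : (size r <= d.+1)%N -> r = \sum_(i < d.+1) r`_i *: 'X^i.
  move=> hr; rewrite -poly_def; apply/polyP => i; rewrite coef_poly.
  by case: ltnP => // hi; rewrite nth_default // (leq_trans hr).
move=> /expand -> /expand ->.
rewrite mulr_suml !linear_sum mulr_suml; apply: eq_bigr => i _.
rewrite mulr_sumr linear_sum mulr_sumr; apply: eq_bigr => j _.
have [lti ltj] := (ltn_ord i, ltn_ord j).
rewrite -scalerAl -scalerAr scalerA -exprD !linearZ /= !revpXn; [|lia..].
by rewrite -scalerAl -scalerAr scalerA -exprD; congr (_ *: 'X^_); lia.
Qed.

Lemma size_prod_le (I : Type) (r : seq I) (d : I -> nat) (P : I -> {poly R}) :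
  (forall i, size (P i) <= (d i).+1)%N ->
  (size (\prod_(i <- r) P i)%R <= (\sum_(i <- r) d i).+1)%N.
Proof.
move=> hP; apply: (big_ind2 (fun p n => size p <= n.+1)%N) => //.
- by rewrite size_poly1.
- by move=> p1 d1 p2 d2; apply: size_mul_le.
Qed.

Lemma revp_prod (I : Type) (r : seq I) (d : I -> nat) (P : I -> {poly R}) :
  (forall i, size (P i) <= (d i).+1)%N ->
  revp (\sum_(i <- r) d i) (\prod_(i <- r) P i) = \prod_(i <- r) revp (d i) (P i).
Proof.
move=> hP; elim: r => [|i r IH].
  by rewrite !big_nil; apply/polyP => k; rewrite coef_poly !coef1; case: k.
by rewrite !big_cons revpM ?IH ?size_prod_le.
Qed.

End ReversePoly.

Lemma bin2D a b : 'C(a + b, 2) = ('C(a, 2) + a * b + 'C(b, 2))%N.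
Proof.
elim: b => [|b IH]; first by rewrite addn0 muln0 !addn0.
by rewrite addnS !(binS _ 1) !bin1 IH; lia.
Qed.

Section LowCoefficients.
Variables (R : comNzRingType) (w y : R).

(* [p] agrees with [(1 + w X)^u + v y X^2] up to degree 2. *)
Definition lowcoef_form (u : nat) (v : R) (p : {poly R}) : Prop :=
  [/\ p`_0 = 1, p`_1 = u%:R * w & p`_2 = v * y + 'C(u, 2)%:R * w ^+ 2].

Lemma lowcoef_form1 : lowcoef_form 0 0 1.
Proof. by split; rewrite coef1 /= ?mul0r ?addr0. Qed.

Lemma lowcoef_formM u1 v1 p1 u2 v2 p2 :
  lowcoef_form u1 v1 p1 -> lowcoef_form u2 v2 p2 ->
  lowcoef_form (u1 + u2) (v1 + v2) (p1 * p2).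
Proof.
case=> p10 p11 p12 [p20 p21 p22].
split; rewrite coefM !big_ord_recr big_ord0 /= add0r ?p10 ?p11 ?p12 ?p20 ?p21 ?p22.
- by rewrite mulr1.
- by rewrite natrD; ring.
- by rewrite bin2D !natrD natrM; ring.
Qed.

Lemma lowcoef_form_prod (I : Type) (r : seq I) (u : I -> nat) (v : I -> R)
    (P : I -> {poly R}) :
  (forall i, lowcoef_form (u i) (v i) (P i)) ->
  lowcoef_form (\sum_(i <- r) u i) (\sum_(i <- r) v i) (\prod_(i <- r) P i).
Proof.
move=> hP; apply: (big_rec3 (fun u v p => lowcoef_form u v p)).
  exact: lowcoef_form1.
by move=> i u' v' p _; apply: lowcoef_formM (hP i).
Qed.

Lemma lowcoef_form_affine (I : finType) (c : I -> R) u (v : I -> R)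
    (P : I -> {poly R}) :
  \sum_i c i = 1 -> (forall i, c i != 0 -> lowcoef_form u (v i) (P i)) ->
  lowcoef_form u (\sum_i c i * v i) (\sum_i c i *: P i).
Proof.
move=> c1 hP.
have coefE k (f : I -> R) : (forall i, c i != 0 -> (P i)`_k = f i) ->
    (\sum_i c i *: P i)`_k = \sum_i c i * f i.
  move=> hf; rewrite coef_sum; apply: eq_bigr => i _; rewrite coefZ.
  by have [->|/hf ->] := eqVneq (c i) 0; rewrite ?mul0r.
split.
- by rewrite (coefE _ (fun=> 1)) => [|i /hP []//]; under eq_bigr do rewrite mulr1.
- rewrite (coefE _ (fun=> u%:R * w)) => [|i /hP []//].
  by rewrite -mulr_suml c1 mul1r.
- rewrite (coefE _ (fun i => v i * y + 'C(u, 2)%:R * w ^+ 2)) => [|i /hP []//].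
  under eq_bigr do rewrite mulrDr mulrA.
  by rewrite big_split /= -mulr_suml -[in X in _ + X]mulr_suml c1 mul1r.
Qed.

End LowCoefficients.

Section WeightedDeterminant.
Variables (R : comNzRingType) (l : nat) (M : 'M[R]_l).

Lemma expand_weighted_det_row (w : 'I_l -> R) i0 :
  \sum_(s : 'S_l) (-1) ^+ s * (\prod_i M i (s i)) * w (s i0) =
  \sum_j w j * M i0 j * cofactor M i0 j.
Proof.
pose G := \matrix_(i, j) ((if i == i0 then w j else 1) * M i j).
have cofG j : cofactor G i0 j = cofactor M i0 j.
  rewrite /cofactor; congr (_ * \det _); apply/matrixP => a b.
  by rewrite !mxE eq_sym (negbTE (neq_lift _ _)) mul1r.
transitivity (\det G); last first.
  by rewrite (expand_det_row _ i0); apply: eq_bigr => j _; rewrite cofG mxE eqxx.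
apply: eq_bigr => s _; rewrite -mulrA (bigD1 i0) //= [in RHS](bigD1 i0) //= mxE eqxx.
have -> : \prod_(i < l | i != i0) G i (s i) = \prod_(i < l | i != i0) M i (s i).
  by apply: eq_bigr => i /negbTE hi; rewrite mxE hi mul1r.
by rewrite mulrAC [w _ * _]mulrC.
Qed.

Lemma sum_weighted_cofactors (w : 'I_l -> R) :
  \sum_i \sum_j w j * M i j * cofactor M i j = (\sum_j w j) * \det M.
Proof.
rewrite exchange_big mulr_suml; apply: eq_bigr => j _ /=.
rewrite (expand_det_col _ j) mulr_sumr.
by under eq_bigr do rewrite -mulrA.
Qed.

Lemma sum_perm_weighted (X : 'I_l -> 'I_l -> R) :
  \sum_(s : 'S_l) (-1) ^+ s * (\prod_i M i (s i)) * \sum_i X i (s i) =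
  \sum_i \sum_j X i j * M i j * cofactor M i j.
Proof.
under eq_bigr do rewrite mulr_sumr.
by rewrite exchange_big; apply: eq_bigr => i _; rewrite expand_weighted_det_row.
Qed.

End WeightedDeterminant.

Lemma mul_ffact_self a i : (a ^_ i * a = a ^_ i.+1 + i * a ^_ i)%N.
Proof.
rewrite ffactnSr; have [le_ia|lt_ai] := leqP i a; last by rewrite ffact_small // !mul0n muln0.
by rewrite mulnBr (mulnC i) subnK // leq_mul2l le_ia orbT.
Qed.

Lemma bin2_ffact a i :
  (2 * 'C(a - i, 2) * a ^_ i + i.*2.+1 * a * a ^_ i = (a * a + i * i.+1) * a ^_ i)%N.
Proof.
have [lt_ai|le_ia] := ltnP a i; first by rewrite ffact_small // !muln0.
have bin2E : (2 * 'C(a - i, 2) = (a - i) * (a - i).-1)%N.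
  by rewrite (mul_bin_left _ 1) bin1 subn1 mulnC.
rewrite bin2E -mulnDl; congr (_ * _)%N; nia.
Qed.

Section FfactMatrix.
Variables (R : comNzRingType) (l : nat) (m : 'I_l -> nat).

Definition ffact_mx : 'M[R]_l := \matrix_(i, j) (m j ^_ i)%:R.
Local Notation F := ffact_mx.
Local Notation C := (cofactor ffact_mx).

Lemma ffact_mxE i j : F i j = (m j ^_ i)%:R.
Proof. exact: mxE. Qed.

(* The determinant of [F] with row [i] replaced by [m j ^_ i.+1], which is row
   [i.+1] of [F] unless [i] is the last row. *)
Definition shift_det (i : 'I_l) := \sum_j (m j ^_ i.+1)%:R * C i j.

Lemma shift_det_eq0 (i : 'I_l) : (i.+1 < l)%N -> shift_det i = 0.
Proof.
move=> lt_il; have ne_i : Ordinal lt_il != i by rewrite -val_eqE /= gtn_eqF.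
transitivity ((F *m \adj F) (Ordinal lt_il) i).
  by rewrite !mxE; apply: eq_bigr => j _; rewrite !mxE.
by rewrite mul_mx_adj !mxE (negbTE ne_i) mulr0n.
Qed.

Lemma expand_ffact_mx_row_mul i :
  \sum_j (m j)%:R * F i j * C i j = shift_det i + i%:R * \det F.
Proof.
rewrite /shift_det (expand_det_row _ i) mulr_sumr -big_split /=.
apply: eq_bigr => j _.
by rewrite ffact_mxE -natrM mulnC mul_ffact_self natrD natrM mulrDl -mulrA.
Qed.

Lemma sum_shift_det :
  \sum_i shift_det i = (\sum_j (m j)%:R - \sum_(i < l) i%:R) * \det F.
Proof.
have := sum_weighted_cofactors F (fun j => (m j)%:R).
under eq_bigr do rewrite expand_ffact_mx_row_mul.
by rewrite big_split /= -mulr_suml mulrBl => <-; rewrite addrK.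
Qed.

Lemma shift_det_odd_weight (i : 'I_l) :
  (i.*2.+1)%:R * shift_det i = (l.*2 - 1)%:R * shift_det i.
Proof.
have [lt_il|le_li] := ltnP i.+1 l; first by rewrite shift_det_eq0 // !mulr0.
by congr (_%:R * _); have := ltn_ord i; lia.
Qed.

Lemma ffact_mx_bin2 (i j : 'I_l) : 2%:R * 'C(m j - i, 2)%:R * F i j =
  ((m j)%:R ^+ 2 - (i.*2.+1)%:R * (m j)%:R + (i * i.+1)%:R) * F i j.
Proof.
apply: (addIr ((i.*2.+1)%:R * (m j)%:R * F i j)).
by rewrite ffact_mxE -!natrM -natrD bin2_ffact !natrM natrD; ring.
Qed.

Lemma ffact_mx_perm_bin2 :
  2%:R * (\sum_(s : 'S_l) (-1) ^+ s * (\prod_i F i (s i)) *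
            \sum_i 'C(m (s i) - i, 2)%:R) =
  \det F * \sum_j ((m j)%:R ^+ 2 - j%:R ^+ 2 - (l.*2 - 1)%:R * ((m j)%:R - j%:R)).
Proof.
have entry (i j : 'I_l) : 2%:R * ('C(m j - i, 2)%:R * F i j * C i j) =
    (m j)%:R ^+ 2 * F i j * C i j - (i.*2.+1)%:R * ((m j)%:R * F i j * C i j)
    + (i * i.+1)%:R * (F i j * C i j).
  by rewrite !mulrA ffact_mx_bin2; ring.
rewrite (sum_perm_weighted _ (fun i j => 'C(m j - i, 2)%:R)) mulr_sumr.
under eq_bigr do rewrite mulr_sumr.
under eq_bigr do under eq_bigr do rewrite entry.
under eq_bigr do rewrite !big_split /= sumrN -!mulr_sumr -expand_det_row
  expand_ffact_mx_row_mul mulrDr shift_det_odd_weight.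
rewrite !big_split /= sum_weighted_cofactors sumrN big_split /= -mulr_sumr sum_shift_det.
have sum_odd : \sum_(i < l) (i.*2.+1)%:R * (i%:R * \det F) =
    (2%:R * \sum_(i < l) i%:R ^+ 2 + \sum_(i < l) i%:R) * \det F.
  rewrite (eq_bigr (fun i : 'I_l => 2%:R * (i%:R ^+ 2 * \det F) + i%:R * \det F)).
    by rewrite big_split /= -mulr_sumr -!mulr_suml; ring.
  by move=> i _; rewrite -addnn -addn1 !natrD; ring.
have sum_pronic : \sum_(i < l) (i * i.+1)%:R * \det F =
    (\sum_(i < l) i%:R ^+ 2 + \sum_(i < l) i%:R) * \det F.
  rewrite (eq_bigr (fun i : 'I_l => i%:R ^+ 2 * \det F + i%:R * \det F)).
    by rewrite big_split /= -!mulr_suml; ring.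
  by move=> i _; rewrite -addn1 natrM natrD; ring.
rewrite sum_odd sum_pronic !sumrN -mulr_sumr sumrB; ring.
Qed.

Lemma prod_ffact_mx_neq0_le (s : 'S_l) :
  \prod_i F i (s i) != 0 -> forall i : 'I_l, (i <= m (s i))%N.
Proof.
move=> neq0 i; rewrite leqNgt; apply: contra neq0 => lt_mi.
by rewrite (bigD1 i) //= ffact_mxE ffact_small // mul0r.
Qed.

Lemma det_ffact_mx :
  \det F = \prod_(i < l) \prod_(j < l | (i < j)%N) ((m j)%:R - (m i)%:R).
Proof.
pose q i : {poly R} := \prod_(0 <= k < i) ('X - k%:R%:P).
have size_q i : size (q i) = i.+1 by rewrite size_prod_XsubC size_iota subn0.
have q_ffact i (a : nat) : (q i).[a%:R] = (a ^_ i)%:R.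
  elim: i => [|i IH]; first by rewrite /q big_geq // hornerC.
  rewrite /q big_nat_recr //= -/(q i) hornerM IH hornerXsubC ffactnSr natrM.
  have [le_ia|lt_ai] := leqP i a; first by rewrite natrB.
  by rewrite ffact_small // !mul0r.
(* [P] is unitriangular since [q i] is monic of degree [i]. *)
pose P : 'M[R]_l := \matrix_(i, r) (q i)`_r.
have -> : F = P *m Vandermonde l (\row_j (m j)%:R).
  apply/matrixP => i j; rewrite ffact_mxE !mxE -q_ffact.
  rewrite (@horner_coef_wide _ l) ?size_q //.
  by apply: eq_bigr => r _; rewrite !mxE.
rewrite det_mulmx det_Vandermonde det_trig; last first.
  by apply/is_trig_mxP => i r lt_ir; rewrite mxE nth_default // size_q.
rewrite big1 ?mul1r => [|i _]; last first.
  by rewrite mxE -[i in _`_i]/(i.+1.-1) -(size_q i) -lead_coefE; apply/monicP/monic_prod_XsubC.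
by apply: eq_bigr => i _; apply: eq_bigr => j _; rewrite !mxE.
Qed.

End FfactMatrix.

Lemma det_ffact_mx_neq0 (R : idomainType) (l : nat) (m : 'I_l -> nat) :
  [pchar R] =i pred0 -> (forall i j : 'I_l, (i < j)%N -> (m j < m i)%N) ->
  \det (ffact_mx R m) != 0.
Proof.
move=> hR m_decr; rewrite det_ffact_mx; apply/prodf_neq0 => i _.
apply/prodf_neq0 => j /m_decr lt_mji.
by rewrite -opprB -natrB ?oppr_eq0 ?(pcharf0P _).1 ?subn_eq0 -?ltnNge // ltnW.
Qed.

Lemma double_sum_natr (R : comNzRingType) a :
  2%:R * \sum_(i < a) i%:R = a%:R ^+ 2 - a%:R :> R.
Proof.
elim: a => [|a IH]; first by rewrite big_ord0; ring.
by rewrite big_ord_recr /= mulrDr IH -addn1 natrD; ring.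
Qed.

Section DegreeVector.
Variable la : seq nat.
Local Notation l := (size la).
Local Notation ns := (degvec la).

Lemma size_degvec : size ns = l.
Proof. by rewrite size_map size_iota. Qed.

Lemma nth_degvec j : (j < l)%N -> nth 0%N ns j = (nth 0%N la j + (l - j.+1))%N.
Proof. by move=> lt_jl; rewrite (nth_map 0) ?size_iota // nth_iota // addnBA. Qed.

Lemma sum_degvec :
  (\sum_(j < l) nth 0%N ns j = sumn la + \sum_(i < l) i)%N.
Proof.
under eq_bigr do rewrite nth_degvec //.
rewrite big_split /=; congr (_ + _)%N; first by rewrite sumnE (big_nth 0) big_mkord.
rewrite (reindex_inj rev_ord_inj); apply: eq_bigr => j _ /=.
by have := ltn_ord j; lia.
Qed.

Lemma degvec_decreasing i j :
  sorted geq la -> (i < j < l)%N -> (nth 0%N ns j < nth 0%N ns i)%N.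
Proof.
move=> la_sorted /andP [lt_ij lt_jl]; have lt_il := ltn_trans lt_ij lt_jl.
have := sorted_leq_nth (rev_trans leq_trans) leqnn 0%N la_sorted i j lt_il lt_jl (ltnW lt_ij).
by rewrite !nth_degvec //=; lia.
Qed.

Lemma content_degvec (R : comNzRingType) :
  2%:R * (content la)%:~R =
  \sum_(j < l) ((nth 0%N ns j)%:R ^+ 2 - j%:R ^+ 2
                - (l.*2 - 1)%:R * ((nth 0%N ns j)%:R - j%:R)) :> R.
Proof.
pose c : R := (l.*2 - 1)%:R.
pose d (j : 'I_l) : R := (l - j.+1)%:R.
have sum_rev : \sum_(j < l) (j%:R ^+ 2 - c * j%:R) = \sum_j (d j ^+ 2 - c * d j).
  by rewrite (reindex_inj rev_ord_inj).
transitivity (\sum_(j < l) (((nth 0%N ns j)%:R ^+ 2 - c * (nth 0%N ns j)%:R)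
                      - (d j ^+ 2 - c * d j))); last first.
  rewrite sumrB -sum_rev -sumrB; apply: eq_bigr => j _; rewrite /c; ring.
rewrite /content rmorph_sum /= big_distrr /=; apply: eq_bigr => j _.
rewrite rmorph_sum; under eq_bigr do rewrite rmorphB /= -!pmulrn.
rewrite sumrB sumr_const card_ord mulrBr double_sum_natr -[la`_j]/(nth 0%N la j).
rewrite /d /c nth_degvec // natrD natrB // -addnn natrB; last by have := ltn_ord j; lia.
rewrite natrD -addn1 natrD; ring.
Qed.

End DegreeVector.

Lemma appell_wrE (R : fieldType) (A : nat -> {poly R}) la :
  let m (j : 'I_(size la)) := nth 0%N (degvec la) j in
  appell_wr A la =
  (\det (ffact_mx R m))^-1 *: \det (\matrix_(i, j) (A (m j))^`(i)).
Proof.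
move=> m; rewrite /appell_wr /wronskian /= !size_map size_iota det_ffact_mx.
by congr (_^-1 *: \det _); apply/matrixP => i j; rewrite !mxE (nth_map 0%N) ?size_degvec.
Qed.

Section AppellSequence.
Variables (R : fieldType) (A : nat -> {poly R}).
Hypotheses (hR : [pchar R] =i pred0) (hA : appell A).
Local Notation z j := (A j).[0].

Lemma derivn_appell n i : (A n)^`(i) = (n ^_ i)%:R *: A (n - i).
Proof.
elim: i => [|i IH]; first by rewrite derivn0 ffactn0 scale1r subn0.
rewrite derivnS IH derivZ ffactnSr natrM -scalerA.
have [lt_in|le_ni] := ltnP i n.
  by rewrite -(subnSK lt_in) (proj2 hA) subnSK.
have /eqP -> : (n - i == 0)%N by rewrite subn_eq0.
by rewrite (proj1 hA) -polyC1 derivC scale0r !scaler0.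
Qed.

Lemma coef_appell n i : (A n)`_i = 'C(n, i)%:R * z (n - i).
Proof.
have i_fact_neq0 : i`!%:R != 0 :> R by rewrite (pcharf0P _).1 // -lt0n fact_gt0.
apply: (mulIf i_fact_neq0).
have := congr1 (fun p : {poly R} => p`_0) (derivn_appell n i).
rewrite coef_derivn addn0 ffactnn coefZ horner_coef0 mulr_natr => ->.
by rewrite mulrAC -natrM bin_ffact.
Qed.

Lemma size_appell n : (size (A n) <= n.+1)%N.
Proof. by apply/leq_sizeP => i lt_ni; rewrite coef_appell bin_small ?mul0r. Qed.

Lemma coef_revp_appell n i : (revp n (A n))`_i = 'C(n, i)%:R * z i.
Proof.
rewrite coef_poly ltnS; have [le_in|lt_ni] := leqP i n; last by rewrite bin_small ?mul0r.
by rewrite coef_appell bin_sub // subKn.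
Qed.

Lemma lowcoef_form_revp_appell n :
  lowcoef_form (z 1) (z 2 - z 1 ^+ 2) n 'C(n, 2)%:R (revp n (A n)).
Proof.
split; rewrite coef_revp_appell.
- by rewrite bin0 mul1r (proj1 hA) hornerC.
- by rewrite bin1.
- by rewrite mulrBr addrNK.
Qed.

Section Wronskian.
Variables (l N : nat) (m : 'I_l -> nat).
Hypothesis sum_m : (\sum_j m j = N + \sum_(i < l) i)%N.
Local Notation F := (ffact_mx R m).

Lemma sum_perm_sub (s : 'S_l) :
  (forall i : 'I_l, i <= m (s i))%N -> (\sum_i (m (s i) - i) = N)%N.
Proof.
move=> le_ms; apply/eqP; rewrite -(eqn_add2r (\sum_(i < l) i)) -sum_m -big_split /=.
under eq_bigr do rewrite subnK //.
by rewrite [X in _ == X](reindex_inj (@perm_inj _ s)).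
Qed.

Lemma revp_wronskian_appell :
  revp N (\det (\matrix_(i, j) (A (m j))^`(i))) =
  \sum_(s : 'S_l) ((-1) ^+ s * \prod_i F i (s i)) *:
    \prod_i revp (m (s i) - i) (A (m (s i) - i)).
Proof.
rewrite linear_sum; apply: eq_bigr => s _.
under eq_bigr do rewrite mxE derivn_appell -(@ffact_mxE R l m).
rewrite scaler_prod -(rmorph_sign polyC) mul_polyC scalerA.
have [->|/prod_ffact_mx_neq0_le le_ms] := eqVneq (\prod_i F i (s i)) 0.
  by rewrite mulr0 !scale0r linear0.
by rewrite linearZ /= -{1}(sum_perm_sub le_ms) revp_prod // => i; apply: size_appell.
Qed.

Lemma lowcoef_form_wronskian_appell : \det F != 0 ->
  lowcoef_form (z 1) (z 2 - z 1 ^+ 2) N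
    ((\det F)^-1 * \sum_(s : 'S_l) (-1) ^+ s * (\prod_i F i (s i)) *
                     \sum_i 'C(m (s i) - i, 2)%:R)
    ((\det F)^-1 *: revp N (\det (\matrix_(i, j) (A (m j))^`(i)))).
Proof.
move=> detF_neq0; rewrite revp_wronskian_appell scaler_sumr mulr_sumr.
under [X in lowcoef_form _ _ _ X _]eq_bigr do rewrite mulrA.
under [X in lowcoef_form _ _ _ _ X]eq_bigr do rewrite scalerA.
apply: lowcoef_form_affine => [|s]; first by rewrite -mulr_sumr mulVf.
rewrite !mulf_eq0 !negb_or => /and3P [_ _ /prod_ffact_mx_neq0_le le_ms].
rewrite -(sum_perm_sub le_ms); apply: lowcoef_form_prod => i.
exact: lowcoef_form_revp_appell.
Qed.

End Wronskian.

Lemma lowcoef_form_appell_wr la : is_partition la ->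
  lowcoef_form (z 1) (z 2 - z 1 ^+ 2) (sumn la) (content la)%:~R
    (revp (sumn la) (appell_wr A la)).
Proof.
move=> /andP [la_sorted _]; rewrite appell_wrE.
set m := fun j => _.
have detF_neq0 : \det (ffact_mx R m) != 0.
  by apply: det_ffact_mx_neq0 => // i j lt_ij; apply: degvec_decreasing => //; rewrite lt_ij /=.
have two_neq0 : 2%:R != 0 :> R by rewrite (pcharf0P _).1.
have -> : (content la)%:~R = (\det (ffact_mx R m))^-1 *
    \sum_(s : 'S_(size la)) (-1) ^+ s * (\prod_i ffact_mx R m i (s i)) *
                            \sum_i 'C(m (s i) - i, 2)%:R.
  by apply: (mulfI two_neq0); rewrite mulrCA ffact_mx_perm_bin2 mulKf // content_degvec.
by rewrite linearZ; apply: lowcoef_form_wronskian_appell (sum_degvec la) detF_neq0.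
Qed.

End AppellSequence.

Theorem propositionA2 (R : fieldType) (hR : [pchar R] =i pred0)
    (A : nat -> {poly R}) (hA : appell A) (la : seq nat)
    (hla : is_partition la) :
  let n := sumn la in
  let z := fun j : nat => (A j).[0] in
  (appell_wr A la)`_n = 1 /\
  ((1 <= n)%N -> (appell_wr A la)`_(n - 1) = n%:R * z 1%N) /\
  ((2 <= n)%N -> (appell_wr A la)`_(n - 2) =
     (content la)%:~R * (z 2%N - z 1%N ^+ 2) + 'C(n, 2)%:R * z 1%N ^+ 2).
Proof.
move=> n z; have [c0 c1 c2] := lowcoef_form_appell_wr hR hA hla.
split; first by rewrite -[n]subn0 -coef_revp.
by split=> ?; rewrite -coef_revp.
Qed.
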